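(* Let $A_\Gamma$ be an Artin group with monoid $A_\Gamma^+$. For any vertex $v=[\alpha]_T$ of $\mathcal D_\Gamma^+$, the map $\iota$ sends the upward link of $[\alpha]_T$ in $\mathcal D_\Gamma^+$ to a full subcomplex of the upward link of $\alpha A_T$ in $\mathcal D_\Gamma$.
   Context: Let $\Gamma$ be a finite simple graph with vertex set $S$, edges $(s,t)$ labelled by integers $m_{st}\ge2$. The Artin group $A_\Gamma$ has presentation $\langle S\mid sts\cdots=tst\cdots \ (\text{both of length } m_{st})\ \forall (s,t)\in E\rangle$ and the Artin monoid $A_\Gamma^+$ has the same positive presentation, regarded as a submonoid of $A_\Gamma$. For $T\subseteq S$, $A_T$, $A_T^+$ are the subgroup/submonoid generated by $T$; $\mathcal S^f$ is the set of $T\subseteq S$ whose Coxeter group $W_T$ (presentation of $A_T$ plus $s^2=e$) is finite. The Deligne complex $\mathcal D_\Gamma$ is the cube complex with vertices the cosets $gA_T$ ($g\in A_\Gamma$, $T\in\mathcal S^f$), ordered by inclusion, where for $gA_T\subseteq gA_{T'}$ the interval $[gA_T,gA_{T'}]$ spans a cube of dimension $|T'\setminus T|$. For $\alpha,\beta\in A_\Gamma^+$ write $\alpha\sim_T\beta$ if $\alpha t=\beta t'$ for some $t,t'\in A_T^+$; $\approx_T$ is its transitive closure and $[\alpha]_T$ the class of $\alpha$. The monoid Deligne complex $\mathcal D_\Gamma^+$ is the cube complex with vertices $[\alpha]_T$ ($\alpha\in A_\Gamma^+$, $T\in\mathcal S^f$) ordered by inclusion, where for $T_1\subseteq T_2$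 in $\mathcal S^f$ the interval $[[\alpha]_{T_1},[\alpha]_{T_2}]$ spans a cube of dimension $|T_2\setminus T_1|$. The map $\iota:\mathcal D_\Gamma^+\to\mathcal D_\Gamma$ sends $[\alpha]_T\mapsto\alpha A_T$ (an embedding of cube complexes). The link of a vertex $v$ in a cube complex is the simplicial complex with a $k$-simplex for each $(k+1)$-cube containing $v$ (vertices correspond to edges at $v$, i.e. to vertices adjacent to $v$). The upward (resp. downward) link of a vertex $v$ in $\mathcal D_\Gamma^+$ or $\mathcal D_\Gamma$ is the subcomplex of its link spanned by the vertices corresponding to adjacent vertices (cosets) that contain (resp. are contained in) the coset $v$. A subcomplex $K$ of a simplicial complex $L$ is full if any set of vertices of $K$ spanning a simplex in $L$ spans a simplex in $K$. *)

From Stdlib Require Import Relations.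
From mathcomp Require Import all_boot.
From Stdlib Require List.

Set Implicit Arguments.
Unset Strict Implicit.
Unset Printing Implicit Defensive.

(* Artin / Coxeter data.  The defining graph Gamma has vertex set S    *)
(* (a finType), edge relation e, and labels m s t (meaningful on edges)*)

Section Artin.
Variables (S : finType) (e : rel S) (m : S -> S -> nat).

Fixpoint alt (s t : S) (n : nat) : seq S :=
  if n is n'.+1 then s :: alt t s n' else [::].

Definition braidL (s t : S) : seq S := alt s t (m s t).
Definition braidR (s t : S) : seq S := alt t s (m s t).

(* letter (s, true) = s, (s, false) = s^-1 *)
Definition gword := seq (S * bool).
Definition pos (w : seq S) : gword := map (fun s => (s, true)) w.

Inductive gstep : gword -> gword -> Prop :=
| GFree (u v : gword) (s : S) (b : bool) :
    gstep (u ++ [:: (s, b); (s, ~~ b)] ++ v) (u ++ v)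
| GBraid (u v : gword) (s t : S) : e s t ->
    gstep (u ++ pos (braidL s t) ++ v) (u ++ pos (braidR s t) ++ v).

Definition geq : gword -> gword -> Prop := clos_refl_sym_trans gword gstep.

Definition in_coset (g : gword) (T : {set S}) (h : gword) : Prop :=
  exists u : gword, all (fun x => x.1 \in T) u /\ geq h (g ++ u).

Inductive mstep : seq S -> seq S -> Prop :=
| MBraid (u v : seq S) (s t : S) : e s t ->
    mstep (u ++ braidL s t ++ v) (u ++ braidR s t ++ v).

Definition meq : seq S -> seq S -> Prop := clos_refl_sym_trans (seq S) mstep.

Definition simT (T : {set S}) (a b : seq S) : Prop :=
  exists t t' : seq S, all (mem T) t /\ all (mem T) t' /\ meq (a ++ t) (b ++ t').

Definition in_class (a : seq S) (T : {set S}) (b : seq S) : Prop :=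
  clos_refl_trans (seq S) (simT T) a b.

Inductive cstep (T : {set S}) : seq S -> seq S -> Prop :=
| CSq (u v : seq S) (s : S) : s \in T ->
    cstep T (u ++ [:: s; s] ++ v) (u ++ v)
| CBraid (u v : seq S) (s t : S) : s \in T -> t \in T -> e s t ->
    cstep T (u ++ braidL s t ++ v) (u ++ braidR s t ++ v).

Definition ceq (T : {set S}) : seq S -> seq S -> Prop :=
  clos_refl_sym_trans (seq S) (cstep T).

Definition spherical (T : {set S}) : Prop :=
  exists L : seq (seq S), forall w : seq S, all (mem T) w ->
    exists2 w', w' \in L & ceq T w w'.

End Artin.

(* Generic cube complex whose vertices are "classes" cls x T (x a      *)
(* representative, T in S^f), ordered by inclusion, and whose cubes    *)
(* are the intervals [cls x T1, cls x T2] (T1 \subset T2), with vertex *)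
(* set { cls x U | T1 \subset U \subset T2 }.                          *)

Section CubeComplex.
Variables (S : finType) (X Y : Type) (cls : X -> {set S} -> Y -> Prop)
          (sph : {set S} -> Prop).

Definition vtx := (X * {set S})%type.

Definition is_vtx (v : vtx) : Prop := sph v.2.

Definition veq (v w : vtx) : Prop :=
  v.2 = w.2 /\ forall y, cls v.1 v.2 y <-> cls w.1 w.2 y.

Definition vle (v w : vtx) : Prop := forall y, cls v.1 v.2 y -> cls w.1 w.2 y.

(* a cube: (x, T1, T2) standing for the interval [cls x T1, cls x T2] *)
Definition cube := (X * {set S} * {set S})%type.

Definition is_cube (c : cube) : Prop :=
  sph c.1.2 /\ sph c.2 /\ c.1.2 \subset c.2.

Definition cube_edge (c : cube) (v w : vtx) : Prop :=
  exists U U' : {set S},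
    [/\ c.1.2 \subset U, U \subset c.2, c.1.2 \subset U', U' \subset c.2 &
     [/\ veq v (c.1.1, U), veq w (c.1.1, U') &
         #|(U :\: U') :|: (U' :\: U)| = 1]].

Definition adjacent (v w : vtx) : Prop :=
  is_vtx v /\ is_vtx w /\
  exists c : cube, [/\ is_cube c, #|c.2 :\: c.1.2| = 1 & cube_edge c v w].

(* a (finite) set sigma of vertices of link(v) spans a simplex of link(v):
   there is a cube containing v among whose edges at v are all [v, w],
   w \in sigma (simplices of link(v) <-> cubes containing v) *)
Definition link_simplex (v : vtx) (sigma : seq vtx) : Prop :=
  (forall w, List.In w sigma -> adjacent v w) /\
  exists c : cube, is_cube c /\ forall w, List.In w sigma -> cube_edge c v w.

Definition up_vertex (v w : vtx) : Prop := adjacent v w /\ vle v w.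

(* simplices of the upward link (full subcomplex of the link spanned by
   the upward vertices) *)
Definition up_simplex (v : vtx) (sigma : seq vtx) : Prop :=
  (forall w, List.In w sigma -> up_vertex v w) /\ link_simplex v sigma.

End CubeComplex.

Definition D_up_vertex (S : finType) (e : rel S) (m : S -> S -> nat) :=
  @up_vertex S (gword S) (gword S) (in_coset e m) (spherical e m).
Definition D_up_simplex (S : finType) (e : rel S) (m : S -> S -> nat) :=
  @up_simplex S (gword S) (gword S) (in_coset e m) (spherical e m).
Definition Dplus_up_vertex (S : finType) (e : rel S) (m : S -> S -> nat) :=
  @up_vertex S (seq S) (seq S) (in_class e m) (spherical e m).
Definition Dplus_up_simplex (S : finType) (e : rel S) (m : S -> S -> nat) :=
  @up_simplex S (seq S) (seq S) (in_class e m) (spherical e m).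

Definition iota_emb (S : finType) (v : vtx S (seq S)) : vtx S (gword S) :=
  (pos v.1, v.2).

(* The map [alpha]_T |-> alpha A_T is well defined and monotone because a
   monoid class [alpha]_T is contained in the coset alpha A_T: every step
   alpha t = beta t' of the closure multiplies the group representative by an
   element of A_T.  If [alpha]_T is contained in [beta]_T', then alpha and
   alpha s (s in T) both lie in beta A_T', so every generator of A_T lies in
   A_T' and alpha A_T is contained in beta A_T'.  Fullness needs only that
   monoid classes are equivalence classes: a cube of D_Gamma at alpha A_T
   whose edges reach the images of upward neighbours [beta]_T' of [alpha]_T
   is read off at alpha instead, and [alpha]_T' = [beta]_T' since alpha lies
   in [beta]_T'. *)
From Pilot Require Import Defs.
From Stdlib Require Import Relations.
From mathcomp Require Import all_boot.

Set Implicit Arguments.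
Unset Strict Implicit.
Unset Printing Implicit Defensive.

Section CubeMap.
Variables (S : finType) (X Y X' Y' : Type) (sph : {set S} -> Prop).
Variables (cls : X -> {set S} -> Y -> Prop) (cls' : X' -> {set S} -> Y' -> Prop).
Variable f : X -> X'.

Definition vtx_map (v : vtx S X) : vtx S X' := (f v.1, v.2).

Hypothesis veq_map : forall v w, veq cls v w -> veq cls' (vtx_map v) (vtx_map w).
Hypothesis vle_map : forall v w, vle cls v w -> vle cls' (vtx_map v) (vtx_map w).

Lemma cube_edge_map (c : cube S X) v w : cube_edge cls c v w ->
  cube_edge cls' (f c.1.1, c.1.2, c.2) (vtx_map v) (vtx_map w).
Proof.
case=> U [U' [cU Uc cU' U'c [vU wU' card1]]].
by exists U, U'; split=> //; split=> //; [exact: veq_map vU | exact: veq_map wU'].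
Qed.

Lemma adjacent_map v w : adjacent cls sph v w ->
  adjacent cls' sph (vtx_map v) (vtx_map w).
Proof.
case=> sph_v [sph_w [c [cube_c dim1 edge_c]]]; split=> //; split=> //.
by exists (f c.1.1, c.1.2, c.2); split=> //; apply: cube_edge_map.
Qed.

Lemma up_vertex_map v w : up_vertex cls sph v w ->
  up_vertex cls' sph (vtx_map v) (vtx_map w).
Proof. by case=> adj_vw le_vw; split; [apply: adjacent_map | apply: vle_map]. Qed.

Lemma up_simplex_map v sigma : up_simplex cls sph v sigma ->
  up_simplex cls' sph (vtx_map v) (map vtx_map sigma).
Proof.
case=> up_sigma [adj_sigma [c [cube_c edge_c]]].
split; first by move=> _ /List.in_map_iff [w [<- /up_sigma]]; apply: up_vertex_map.
split; first by move=> _ /List.in_map_iff [w [<- /adj_sigma]]; apply: adjacent_map.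
exists (f c.1.1, c.1.2, c.2); split=> //.
by move=> _ /List.in_map_iff [w [<- /edge_c]]; apply: cube_edge_map.
Qed.

End CubeMap.

Section FullImage.
Variables (S : finType) (X X' Y' : Type) (sph : {set S} -> Prop).
Variables (cls : X -> {set S} -> X -> Prop) (cls' : X' -> {set S} -> Y' -> Prop).
Variable f : X -> X'.

Hypothesis cls_refl : forall x T, cls x T x.
Hypothesis cls_sym : forall x T y, cls x T y -> cls y T x.
Hypothesis cls_trans : forall x T y z, cls x T y -> cls y T z -> cls x T z.

Lemma veq_up_rep (v w : vtx S X) : vle cls v w -> veq cls w (v.1, w.2).
Proof.
move=> le_vw; have w_v1 := le_vw _ (cls_refl v.1 v.2).
by split=> //= y; split; [apply: cls_trans (cls_sym w_v1) | apply: cls_trans].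
Qed.

Lemma up_simplex_full v sigma :
  (forall w, List.In w sigma -> up_vertex cls sph v w) ->
  up_simplex cls' sph (vtx_map f v) (map (vtx_map f) sigma) ->
  up_simplex cls sph v sigma.
Proof.
move=> up_sigma [_ [_ [c [[sph_c1 [sph_c2 sub_c]] edge_c]]]].
split=> //; split; first by move=> w /up_sigma [].
exists (v.1, c.1.2, c.2); split; first by split.
move=> w w_sigma; have [_ le_vw] := up_sigma w w_sigma.
have [U [U' [cU Uc cU' U'c [[/= vU _] [/= wU' _] card1]]]] :=
  edge_c _ (List.in_map (vtx_map f) _ _ w_sigma).
exists U, U'; split=> //; split=> //.
- by rewrite -vU; split.
- by rewrite -wU'; apply: veq_up_rep le_vw.
Qed.

End FullImage.

Section ArtinCosets.
Variables (S : finType) (e : rel S) (m : S -> S -> nat).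
Local Notation geq := (Defs.geq e m).
Local Notation gword := (gword S).

Lemma geq_refl x : geq x x. Proof. exact: rst_refl. Qed.
Lemma geq_sym x y : geq x y -> geq y x. Proof. exact: rst_sym. Qed.
Lemma geq_trans x y z : geq x y -> geq y z -> geq x z. Proof. exact: rst_trans. Qed.

Lemma gstep_ctx c d a b : gstep e m a b -> gstep e m (c ++ a ++ d) (c ++ b ++ d).
Proof.
case=> [u v s b' | u v s t est].
- by have := GFree e m (c ++ u) (v ++ d) s b'; rewrite -!catA.
- by have := GBraid m (c ++ u) (v ++ d) est; rewrite -!catA.
Qed.

Lemma geq_ctx c d a b : geq a b -> geq (c ++ a ++ d) (c ++ b ++ d).
Proof.
elim=> [x y xy | x | x y _ IHxy | x y z _ IHxy _ IHyz].
- exact/rst_step/gstep_ctx.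
- exact: geq_refl.
- exact: geq_sym.
- exact: geq_trans IHyz.
Qed.

Lemma geq_catl c a b : geq a b -> geq (c ++ a) (c ++ b).
Proof. by move/(geq_ctx c [::]); rewrite !cats0. Qed.

Lemma geq_catr d a b : geq a b -> geq (a ++ d) (b ++ d).
Proof. exact: (geq_ctx [::] d). Qed.

Lemma geq_cat a a' b b' : geq a a' -> geq b b' -> geq (a ++ b) (a' ++ b').
Proof. by move=> /(geq_catr b) aa' /(geq_catl a') bb'; apply: geq_trans bb'. Qed.

Definition ginv (u : gword) : gword := rev (map (fun x => (x.1, ~~ x.2)) u).

Lemma ginvK : involutive ginv.
Proof.
move=> u; rewrite /ginv map_rev revK -map_comp -[RHS]map_id.
by apply: eq_map => -[x b] /=; rewrite negbK.
Qed.

Lemma geq_cat_ginv u : geq (u ++ ginv u) [::].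
Proof.
elim: u => [|[s b] u IHu]; first exact: geq_refl.
rewrite /ginv /= rev_cons -cats1 -/(ginv u) -cat1s (catA u).
apply: geq_trans (_ : geq ([:: (s, b)] ++ [::] ++ [:: (s, ~~ b)]) _).
  exact: geq_ctx.
exact/rst_step/(GFree e m [::] [::] s b).
Qed.

Lemma geq_ginv_cat u : geq (ginv u ++ u) [::].
Proof. by have := geq_cat_ginv (ginv u); rewrite ginvK. Qed.

Lemma geq_divl p x y : geq (p ++ x) y -> geq x (ginv p ++ y).
Proof.
move=> /(geq_catl (ginv p)); apply: geq_trans.
by rewrite catA; apply: geq_sym; apply: (geq_catr x (geq_ginv_cat p)).
Qed.

Lemma geq_divr p x y : geq (x ++ p) y -> geq x (y ++ ginv p).
Proof.
move=> /(geq_catr (ginv p)); apply: geq_trans.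
rewrite -catA; apply: geq_sym.
by have := geq_catl x (geq_cat_ginv p); rewrite cats0.
Qed.

Lemma geq_cancell p x y : geq (p ++ x) (p ++ y) -> geq x y.
Proof.
move/geq_divl/geq_trans; apply.
by rewrite catA; apply: (geq_catr y (geq_ginv_cat p)).
Qed.

Lemma geq_ginv u v : geq u v -> geq (ginv u) (ginv v).
Proof.
move=> uv; apply: geq_sym.
have /geq_divl : geq (u ++ ginv v) [::].
  by apply: geq_trans (geq_cat_ginv v); apply: geq_catr.
by rewrite cats0.
Qed.

Definition over (T : {set S}) (u : gword) := all (fun x => x.1 \in T) u.

Lemma over_cat T u v : over T (u ++ v) = over T u && over T v.
Proof. exact: all_cat. Qed.

Lemma over_ginv T u : over T (ginv u) = over T u.
Proof. by rewrite /over /ginv all_rev all_map. Qed.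

Lemma over_pos (T : {set S}) (t : seq S) : over T (pos t) = all (mem T) t.
Proof. by rewrite /over /pos all_map. Qed.

Lemma geq_pos a b : meq e m a b -> geq (pos a) (pos b).
Proof.
elim=> [x y [u v s t est] | x | x y _ IHxy | x y z _ IHxy _ IHyz].
- by rewrite /pos !map_cat; apply/rst_step/(GBraid m (pos u) (pos v) est).
- exact: geq_refl.
- exact: geq_sym.
- exact: geq_trans IHyz.
Qed.

Lemma pos_cat (a b : seq S) : pos (a ++ b) = pos a ++ pos b.
Proof. exact: map_cat. Qed.

Lemma in_coset_rep g g' T u : over T u -> geq g' (g ++ u) ->
  forall h, in_coset e m g T h <-> in_coset e m g' T h.
Proof.
move=> Tu g'gu h; split=> -[w [Tw hgw]].
- exists (ginv u ++ w); split; first by rewrite -/(over T _) over_cat over_ginv Tu.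
  apply: geq_trans hgw _; rewrite catA; apply: geq_catr.
  exact/geq_divr/geq_sym.
- exists (u ++ w); split; first by rewrite -/(over T _) over_cat Tu.
  by apply: geq_trans hgw _; rewrite catA; apply: geq_catr.
Qed.

Section GeneratorsInSubgroup.
Variables T T' : {set S}.
Hypothesis genT : forall s, s \in T -> exists2 w, over T' w & geq [:: (s, true)] w.

Lemma geq_over_sub u : over T u -> exists2 u', over T' u' & geq u u'.
Proof.
elim: u => [|[s b] u IHu] /=; first by exists [::]; last exact: geq_refl.
case/andP=> /genT[ws T'ws sws] /IHu[u' T'u' uu'].
exists ((if b then ws else ginv ws) ++ u').
  by rewrite over_cat T'u' andbT; case: b; rewrite ?over_ginv.
apply: (geq_cat (a := [:: (s, b)])) uu'.
by case: b => //; exact: (geq_ginv sws).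
Qed.

Lemma in_coset_sub g g' u : over T' u -> geq g (g' ++ u) ->
  forall h, in_coset e m g T h -> in_coset e m g' T' h.
Proof.
move=> T'u gg'u h [w [Tw hgw]]; have [w' T'w' ww'] := geq_over_sub Tw.
exists (u ++ w'); split; first by rewrite -/(over T' _) over_cat T'u.
by apply: geq_trans hgw _; rewrite catA; apply: geq_cat.
Qed.

End GeneratorsInSubgroup.

Lemma simT_sym T a b : simT e m T a b -> simT e m T b a.
Proof.
by case=> t [t' [Tt [Tt' ab]]]; exists t', t; do 2!split=> //; apply: rst_sym.
Qed.

Lemma in_class_refl a T : in_class e m a T a.
Proof. exact: rt_refl. Qed.

Lemma in_class_trans a T b c :
  in_class e m a T b -> in_class e m b T c -> in_class e m a T c.
Proof. exact: rt_trans. Qed.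

Lemma in_class_sym a T b : in_class e m a T b -> in_class e m b T a.
Proof.
elim=> [x y /simT_sym | x | x y z _ IHxy _ IHyz]; first exact: rt_step.
- exact: rt_refl.
- exact: rt_trans IHyz IHxy.
Qed.

Lemma in_class_cat a (T : {set S}) t : all (mem T) t -> in_class e m a T (a ++ t).
Proof.
by move=> Tt; apply: rt_step; exists t, [::]; rewrite cats0; do 2!split=> //;
  apply: rst_refl.
Qed.

Lemma simT_coset T a b : simT e m T a b ->
  exists2 u, over T u & geq (pos a) (pos b ++ u).
Proof.
case=> t [t' [Tt [Tt' /geq_pos]]]; rewrite !pos_cat => /geq_divr abt.
exists (pos t' ++ ginv (pos t)).
  by rewrite over_cat over_ginv !over_pos Tt Tt'.
by rewrite catA.
Qed.

Lemma in_class_coset a T b : in_class e m a T b ->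
  exists2 u, over T u & geq (pos b) (pos a ++ u).
Proof.
elim=> [x y /simT_sym/simT_coset // | x | x y z _ [u Tu yxu] _ [u' Tu' zyu']].
- by exists [::]; rewrite ?cats0 //; apply: geq_refl.
- exists (u ++ u'); first by rewrite over_cat Tu.
  by apply: geq_trans zyu' _; rewrite catA; apply: geq_catr.
Qed.

Lemma veq_iota v w : veq (in_class e m) v w ->
  veq (in_coset e m) (vtx_map (@pos S) v) (vtx_map (@pos S) w).
Proof.
case: v w => [a U] [b _] [/= <- ab].
have [u Uu bau] := in_class_coset (proj2 (ab b) (in_class_refl b U)).
by split=> //= y; apply: in_coset_rep Uu bau y.
Qed.

Lemma vle_iota v w : vle (in_class e m) v w ->
  vle (in_coset e m) (vtx_map (@pos S) v) (vtx_map (@pos S) w).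
Proof.
case: v w => [a T] [b T'] le_ab.
have [u0 T'u0 a_bu0] := in_class_coset (le_ab a (in_class_refl a T)).
move=> y; apply: (in_coset_sub _ T'u0 a_bu0) => s Ts.
have [us T'us as_bus] :
    exists2 us, over T' us & geq (pos (a ++ [:: s])) (pos b ++ us).
  by apply/in_class_coset/le_ab/in_class_cat; rewrite /= Ts.
exists (ginv u0 ++ us); first by rewrite over_cat over_ginv T'u0.
apply/geq_divl/(geq_cancell (p := pos b)); rewrite catA.
by apply: geq_trans as_bus; rewrite pos_cat; apply/geq_catr/geq_sym.
Qed.

End ArtinCosets.

Theorem lemma5p7 (S : finType) (e : rel S) (m : S -> S -> nat) :
  symmetric e -> irreflexive e ->
  (forall s t, m s t = m t s) -> (forall s t, e s t -> 2 <= m s t) ->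
  forall (alpha : seq S) (T : {set S}), spherical e m T ->
  let v := (alpha, T) in
  (* iota maps the upward link of [alpha]_T into that of alpha A_T *)
  (forall w, Dplus_up_vertex e m v w -> D_up_vertex e m (iota_emb v) (iota_emb w)) /\
  (forall sigma, Dplus_up_simplex e m v sigma ->
     D_up_simplex e m (iota_emb v) (map (@iota_emb S) sigma)) /\
  (* and its image is a full subcomplex *)
  (forall sigma, (forall w, List.In w sigma -> Dplus_up_vertex e m v w) ->
     D_up_simplex e m (iota_emb v) (map (@iota_emb S) sigma) ->
     Dplus_up_simplex e m v sigma).
Proof.
move=> _ _ _ _ alpha T _ v.
have veq_map := @veq_iota S e m; have vle_map := @vle_iota S e m.
split; first by move=> w; apply: up_vertex_map.
split; first by move=> sigma; apply: up_simplex_map.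
exact: (up_simplex_full (@in_class_refl S e m) (@in_class_sym S e m)
                        (@in_class_trans S e m)).
Qed.
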